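(* Let $M'=M[D,K]$ be a compatible minor of the weighted uncertainty matroid $\mathcal{M}$. Let $e$ be a non-trivial element of $M'$ such that (i) $e\in B$ for some minimum-weight basis $B$ of $M'$, (ii) $w_e=U_e$, (iii) $e$ has minimum weight in $E(M')\setminus\mathrm{span}_{M'}(B\setminus\{e\})$, and (iv) $e$ has maximum query cost in $(E(M')\setminus\mathrm{span}_{M'}(B\setminus\{e\}))\cap E^U_{w_e}$. Then $M[D,K\cup\{e\}]$ is a compatible minor of $\mathcal{M}$.
   Context: A weighted uncertainty matroid $\mathcal{M}=(E,\mathcal{I},A,w)$ consists of a matroid $M=(E,\mathcal{I})$ on a finite set $E$, for each $e\in E$ a non-empty finite union $A_e$ of bounded real intervals (each open or closed), a weight $w_e\in A_e$, and a query cost $c_e\ge0$. $L_e=\inf A_e$, $U_e=\sup A_e$; $e$ is trivial if $A_e=\{w_e\}$. For a real $x$, $E^U_x=\{e\in E: U_e=x \text{ and } e \text{ non-trivial}\}$. A minimum-weight basis (MWB) is a basis minimizing total weight. A weight assignment is $w^*$ with $w^*_e\in A_e$, consistent with $Q$ if $w^*_e=w_e$ on $Q$. $Q$ verifies an MWB $B$ if for every weight assignment consistent with $Q$, $B$ is an MWB with respect to it; a certificate for $\mathcal{M}$ is a set verifying some MWB, and $c^*$ denotes the minimum cost $\sum_{e\in Q}c_e$ of a certificate for $\mathcal{M}$. For $D,K\subseteq E$, $M[D,K]$ is the matroid obtained from $M$ by deleting $D$ and contracting $K$, ground set $E(M[D,K])=E\setminus(D\cup K)$, weights restricted. $M[D,K]$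 is a compatible minor if there is a set $Q$ of cost $c^*$ verifying an MWB $B$ of $\mathcal{M}$ with $K\subseteq B$, $D\cap B=\emptyset$. $\mathrm{span}_N(X)=\{e: r_N(X\cup\{e\})=r_N(X)\}$. *)

From HB Require Import structures.
From mathcomp Require Import all_boot all_order all_algebra.
From mathcomp Require Import boolp classical_sets reals.
Set Implicit Arguments. Unset Strict Implicit. Unset Printing Implicit Defensive.
Import Order.TTheory GRing.Theory Num.Theory.
Local Open Scope ring_scope.

Record matroid (T : finType) := Matroid {
  indep : {set T} -> bool;
  indep0 : indep finset.set0;
  indep_sub : forall A B : {set T}, A \subset B -> indep B -> indep A;
  indep_exch : forall A B : {set T}, indep A -> indep B -> (#|A| < #|B|)%N ->
     exists2 x, x \in B :\: A & indep (x |: A)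
}.

Section MatroidDefs.
Variables (T : finType) (M : matroid T).

Definition rank (X : {set T}) : nat :=
  \max_(Y : {set T} | (Y \subset X) && indep M Y) #|Y|.

(* The minor M[D,K] = M \ D / K: ground set E \ (D u K), rank
   r_{M[D,K]}(X) = r_M(X u K) - r_M(K). *)
Definition mground (D K : {set T}) : {set T} := ~: (D :|: K).
Definition mrank (D K X : {set T}) : nat := (rank (X :|: K) - rank K)%N.
Definition mindep (D K I : {set T}) : bool :=
  (I \subset mground D K) && (mrank D K I == #|I|)%N.
Definition mbasis (D K B : {set T}) : Prop :=
  mindep D K B /\
  forall x, x \in mground D K -> x \notin B -> ~~ mindep D K (x |: B).
Definition mspan (D K X : {set T}) : {set T} :=
  [set e | mrank D K (e |: X) == mrank D K X].
End MatroidDefs.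

Definition in_itv (R : realType) (I : R * R * bool) (x : R) : Prop :=
  let: (lo, hi, closed) := I in
  if closed then lo <= x <= hi else lo < x < hi.

Definition uset (R : realType) (s : seq (R * R * bool)) : set R :=
  fun x => exists2 I, I \in s & in_itv I x.

Record umatroid (R : realType) (T : finType) := UMatroid {
  mat : matroid T;
  unc : T -> seq (R * R * bool);
  wt : T -> R;
  cost : T -> R;
  unc_nonempty : forall e, exists x, uset (unc e) x;
  wt_in : forall e, uset (unc e) (wt e);
  cost_ge0 : forall e, 0 <= cost e
}.

Section UDefs.
Variables (R : realType) (T : finType) (UM : umatroid R T).
Let M := mat UM.
Let w := wt UM.
Definition Aset (e : T) : set R := uset (unc UM e).
Definition Lo (e : T) : R := inf (Aset e).
Definition Up (e : T) : R := sup (Aset e).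
Definition trivial_elt (e : T) : Prop := forall x, Aset e x <-> x = w e.

Definition setw (w' : T -> R) (B : {set T}) : R := \sum_(f in B) w' f.

Definition MWB_minor (w' : T -> R) (D K B : {set T}) : Prop :=
  mbasis M D K B /\
  forall B', mbasis M D K B' -> setw w' B <= setw w' B'.
Definition MWB (w' : T -> R) (B : {set T}) : Prop := MWB_minor w' finset.set0 finset.set0 B.

Definition weight_assignment (w' : T -> R) : Prop := forall e, Aset e (w' e).
Definition consistent (Q : {set T}) (w' : T -> R) : Prop :=
  weight_assignment w' /\ forall e, e \in Q -> w' e = w e.
Definition verifies (Q B : {set T}) : Prop :=
  forall w', consistent Q w' -> MWB w' B.
Definition certificate (Q : {set T}) : Prop := exists B, verifies Q B.
Definition qcost (Q : {set T}) : R := \sum_(f in Q) cost UM f.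

Definition compatible_minor (D K : {set T}) : Prop :=
  exists Q B,
    certificate Q /\ (forall Q', certificate Q' -> qcost Q <= qcost Q') /\
    verifies Q B /\ K \subset B /\ [disjoint D & B].
End UDefs.

(* Let Q be an optimal query set verifying a minimum-weight basis Bs of M with
   K <= Bs and D disjoint from Bs, and suppose e is not in Bs.  Since
   (B - e) + K + e is independent, Bs contains an f outside the span of
   (B - e) + K such that Bs - f + e is again a basis; it contains e + K, avoids
   D, and f lies in E(M') \ span(B - e), so w_e <= w_f by (iii).  As Bs is
   minimal for every assignment w' consistent with Q, always w'_f <= w'_e.
   Hence e is in Q (otherwise lowering w_e below U_e = w_e is a contradiction)
   and w_f = w_e; if f is not already fixed by Q, then U_f = w_e and (iv) gives
   c_f <= c_e.  Finally Q itself, or Q - e + f, verifies Bs - f + e at cost at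
   most c^*: resetting e to w_e turns any assignment consistent with it into
   one consistent with Q, under which Bs - f + e weighs as much as Bs (as
   w_f = w_e), while the weight of Bs - f + e rises at least as much as that
   of any other basis. *)

From mathcomp Require Import all_boot all_order all_algebra.
From mathcomp Require boolp classical_sets.
From mathcomp Require Import reals.
From mathcomp Require Import zify lra.
Import Order.TTheory GRing.Theory Num.Theory.
Local Open Scope ring_scope.

Set Implicit Arguments. Unset Strict Implicit.

Section Matroid.
Variables (T : finType) (M : matroid T).
Implicit Types (D K B Bs I J S X Y Z : {set T}) (e f x : T).

Lemma rank_leq_card X : (rank M X <= #|X|)%N.
Proof. by apply/bigmax_leqP => Y /andP [sYX _]; apply: subset_leq_card. Qed.

Lemma leq_rank X Y : Y \subset X -> indep M Y -> (#|Y| <= rank M X)%N.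
Proof.
move=> sYX iY; pose P Y := (Y \subset X) && indep M Y.
by apply: (@leq_bigmax_cond _ P (fun Y => #|Y|)); rewrite /P sYX iY.
Qed.

Lemma indep_rankE X : indep M X = (rank M X == #|X|).
Proof.
apply/idP/eqP => [iX | ]; first by apply/eqP; rewrite eqn_leq rank_leq_card leq_rank.
pose P Y := (Y \subset X) && indep M Y.
have P0 : P finset.set0 by rewrite /P sub0set indep0.
rewrite /rank (@bigop.bigmax_eq_arg _ _ P _ P0).
case: arg_maxnP => // Y /andP [sYX iY] _ rkY.
suff /eqP <- : Y == X by [].
by rewrite eqEcard sYX /= rkY.
Qed.

Lemma rank_indep X : indep M X -> rank M X = #|X|.
Proof. by rewrite indep_rankE => /eqP. Qed.

Lemma maximal_indep_ext X Y : X \subset Y -> indep M X ->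
  exists Z, [/\ X \subset Z, Z \subset Y, indep M Z &
    forall I, I \subset Y -> indep M I -> (#|I| <= #|Z|)%N].
Proof.
move=> sXY iX; pose P Z := [&& X \subset Z, Z \subset Y & indep M Z].
have PX : P X by rewrite /P subxx sXY iX.
case: (arg_maxnP (fun Z => #|Z|) PX) => Z /and3P [sXZ sZY iZ] maxZ.
exists Z; split=> // I sIY iI; rewrite leqNgt; apply/negP => ltZI.
have [x /setDP [xI xZ] ixZ] := indep_exch iZ iI ltZI.
have /maxZ : P (x |: Z).
  by rewrite /P ixZ (subset_trans sXZ (subsetUr _ _)) subUset sub1set (subsetP sIY x xI) sZY.
by rewrite cardsU1 xZ /= add1n ltnn.
Qed.

Lemma card_indep_spanned J Y I : indep M J ->
  (forall y, y \in Y -> (y \in J) || ~~ indep M (y |: J)) ->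
  I \subset J :|: Y -> indep M I -> (#|I| <= #|J|)%N.
Proof.
move=> iJ spanY sIJY iI; rewrite leqNgt; apply/negP => ltJI.
have [x /setDP [xI xJ] ixJ] := indep_exch iJ iI ltJI.
have := subsetP sIJY x xI; rewrite in_setU (negbTE xJ) => /spanY.
by rewrite (negbTE xJ) ixJ.
Qed.

Local Notation basis Bs := (mbasis M finset.set0 finset.set0 Bs).

Lemma mindep0 X : mindep M finset.set0 finset.set0 X = indep M X.
Proof.
rewrite /mindep /mground /mrank !setU0 setC0 subsetT (rank_indep (indep0 M)).
by rewrite cards0 subn0 indep_rankE.
Qed.

Lemma basisP Bs :
  basis Bs <-> indep M Bs /\ forall x, x \notin Bs -> ~~ indep M (x |: Bs).
Proof.
rewrite /mbasis mindep0; split=> [] [iBs maxBs]; split=> // x.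
  by rewrite -mindep0; apply: maxBs; rewrite /mground setU0 setC0 inE.
by move=> _; rewrite mindep0; apply: maxBs.
Qed.

Lemma basis_card Bs I : basis Bs -> indep M I -> (#|I| <= #|Bs|)%N.
Proof.
case/basisP=> iBs maxBs; apply: (@card_indep_spanned _ setT) => //.
  by move=> y _; case: (boolP (y \in Bs)) => //= /maxBs.
by rewrite setUT subsetT.
Qed.

Lemma basis_exchange Bs e f : basis Bs -> f \in Bs -> e \notin Bs ->
  indep M (e |: (Bs :\ f)) -> basis (e |: (Bs :\ f)).
Proof.
move=> bBs fBs eBs iB2; apply/basisP; split=> // x xB2; apply/negP => ix.
have := basis_card bBs ix; rewrite cardsU1 xB2 cardsU1 in_setD1 (negbTE eBs) andbF.
by rewrite (cardsD1 f Bs) fBs add1n ltnn.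
Qed.

Lemma indep_setU1_spanned I S e : indep M S -> indep M (e |: I) -> e \notin I ->
  (forall y, y \in S -> (y \in I) || ~~ indep M (y |: I)) -> indep M (e |: S).
Proof.
move=> iS ieI eI spanS; have iI : indep M I := indep_sub (subsetUr _ _) ieI.
have sSeSI : S \subset e |: (S :|: I) by rewrite subsetU // subsetUl orbT.
have [Z [sSZ sZeSI iZ maxZ]] := maximal_indep_ext sSeSI iS.
suff eZ : e \in Z by apply: indep_sub iZ; rewrite subUset sub1set eZ sSZ.
apply/negPn/negP => eZ.
have sZIS : Z \subset I :|: S.
  apply/subsetP => x xZ; have := subsetP sZeSI x xZ; rewrite !inE.
  by case: eqP => [xe | _] /=; [rewrite -xe xZ in eZ | rewrite orbC].
have := maxZ _ (setUS [set e] (subsetUr S I)) ieI.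
by rewrite cardsU1 eI add1n ltnNge (card_indep_spanned iI spanS sZIS iZ).
Qed.

Lemma basis_exchange_avoiding Bs S e : basis Bs -> S \subset Bs -> e \notin Bs ->
  indep M (e |: S) -> exists2 f, f \in Bs :\: S & indep M (e |: (Bs :\ f)).
Proof.
move=> bBs sSBs eBs ieS; have /basisP [iBs maxBs] := bBs.
have [Z [seSZ sZeBs iZ maxZ]] := maximal_indep_ext (setUS [set e] sSBs) ieS.
have eZ : e \in Z by apply: (subsetP seSZ); apply: setU11.
have /subsetPn [f fBs fZ] : ~~ (Bs \subset Z).
  apply: contraL (maxBs e eBs) => sBsZ; rewrite negbK.
  by apply: indep_sub iZ; rewrite subUset sub1set eZ.
exists f.
  by rewrite inE fBs andbT; apply: contra fZ => fS; rewrite (subsetP seSZ) // setU1r.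
suff /eqP <- : Z == e |: (Bs :\ f) by [].
rewrite eqEcard; apply/andP; split.
  apply/subsetP => x xZ; have := subsetP sZeBs x xZ; rewrite !inE.
  by case: (x =P f) => [xf | _]; first by rewrite -xf xZ in fZ.
rewrite cardsU1 in_setD1 (negbTE eBs) andbF add1n.
by have := maxZ _ (subsetUr _ _) iBs; rewrite (cardsD1 f Bs) fBs.
Qed.

Lemma in_mground D K x : (x \in mground D K) = (x \notin D) && (x \notin K).
Proof. by rewrite !inE negb_or. Qed.

Lemma mindep_indepU D K I : indep M K -> mindep M D K I -> indep M (I :|: K).
Proof.
move=> iK /andP [sIG /eqP]; rewrite /mrank (rank_indep iK) => rkIK.
have IK0 : I :&: K = finset.set0.
  apply/setP => x; rewrite !inE; case: (boolP (x \in I)) => //= xI.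
  by move: (subsetP sIG x xI); rewrite in_mground => /andP [_ /negbTE].
rewrite indep_rankE cardsU IK0 cards0 subn0.
by apply/eqP; have := leq_rank (subsetUr I K) iK; lia.
Qed.

Lemma notin_mspan D K X x :
  indep M (x |: (X :|: K)) -> x \notin X :|: K -> x \notin mspan M D K X.
Proof.
move=> ixXK xXK; have iXK := indep_sub (subsetUr _ _) ixXK.
rewrite inE /mrank -setUA (rank_indep ixXK) (rank_indep iXK) cardsU1 xXK.
have := leq_trans (rank_leq_card K) (subset_leq_card (subsetUr X K)).
by apply: contraL => /eqP; lia.
Qed.

Lemma basis_exchange_minor D K B Bs e :
  basis Bs -> K \subset Bs -> [disjoint D & Bs] ->
  mindep M D K B -> e \in B -> e \notin Bs ->
  exists2 f, f \in Bs &
    [/\ f \in mground D K :\: mspan M D K (B :\ e), basis (e |: (Bs :\ f)),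
        e |: K \subset e |: (Bs :\ f) & [disjoint D & e |: (Bs :\ f)]].
Proof.
move=> bBs sKBs dDBs iB eB eBs; have /basisP [iBs _] := bBs.
have := subsetP (andP iB).1 e eB; rewrite in_mground => /andP [eD eK].
set I := (B :\ e) :|: K.
have ieI : indep M (e |: I).
  by rewrite /I setUA setD1K // (mindep_indepU (indep_sub sKBs iBs) iB).
have eI : e \notin I by rewrite !inE eqxx (negbTE eK).
pose S := [set y in Bs | (y \in I) || ~~ indep M (y |: I)].
have sSBs : S \subset Bs by apply/subsetP => y; rewrite inE => /andP [].
have ieS : indep M (e |: S).
  by apply: indep_setU1_spanned (indep_sub sSBs iBs) ieI eI _ => y; rewrite inE => /andP [].
have [f /setDP [fBs fS] ieB2] := basis_exchange_avoiding bBs sSBs eBs ieS.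
move: fS; rewrite inE fBs negb_or negbK => /andP [fI ifI].
have fK : f \notin K by apply: contra fI; rewrite in_setU orbC => ->.
exists f => //; split.
- by rewrite in_setD in_mground (disjointFl dDBs fBs) fK (notin_mspan _ ifI fI).
- exact: basis_exchange.
- by rewrite setUS // subsetD1 sKBs fK.
rewrite disjoint_sym disjoints_subset subUset sub1set inE eD -disjoints_subset disjoint_sym.
exact: disjointWr (subD1set _ _) dDBs.
Qed.

End Matroid.

Section Weights.
Variables (R : realType) (T : finType) (UM : umatroid R T).
Local Notation w := (wt UM).
Local Notation basis Bs := (mbasis (mat UM) finset.set0 finset.set0 Bs).
Implicit Types (Q B Bs : {set T}) (e f y : T) (a x : R).

Lemma Aset_ubound e : classical_sets.has_ubound (Aset UM e).
Proof.
exists (\big[Num.max/0]_(I <- unc UM e) I.1.2) => x [I Is xI].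
apply: le_trans (le_bigmax_seq 0 I predT (fun I : R * R * bool => I.1.2) Is isT).
by case: I {Is} xI => [[lo hi] []] /andP [_ //]; apply: ltW.
Qed.

Lemma Aset_le_Up e x : Aset UM e x -> x <= Up UM e.
Proof. exact: (ub_le_sup (Aset_ubound e)). Qed.

Lemma Up_le e a : (forall x, Aset UM e x -> x <= a) -> Up UM e <= a.
Proof. by move=> ub; apply: ge_sup => //; exists (w e); apply: wt_in. Qed.

Lemma exists_lt_Up e : ~ trivial_elt UM e -> w e = Up UM e ->
  exists2 x, Aset UM e x & x < w e.
Proof.
move=> ntriv wUe; apply: boolp.contrapT => nlt; apply: ntriv => x.
split=> [Ax | ->]; last exact: wt_in.
apply/eqP; rewrite eq_le {1}wUe Aset_le_Up //= leNgt.
by apply/negP => ltx; apply: nlt; exists x.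
Qed.

Definition reweight (w' : T -> R) y a : T -> R := fun z => if z == y then a else w' z.

Lemma consistent_wt Q : consistent UM Q w.
Proof. by split=> // e; apply: wt_in. Qed.

Lemma consistent_reweight Q Q' (w' : T -> R) y a : consistent UM Q w' -> Aset UM y a ->
  Q' \subset y |: Q -> (y \in Q' -> a = w y) -> consistent UM Q' (reweight w' y a).
Proof.
move=> [wa eqQ] Aa sQ' ya; split=> z; rewrite /reweight; case: eqP => [-> // | zy].
  exact: wa.
move=> zQ'; apply: eqQ; move: (subsetP sQ' z zQ'); rewrite in_setU1.
by case/orP => [/eqP|].
Qed.

Lemma setw_reweight (w' : T -> R) y a B :
  setw (reweight w' y a) B = setw w' B + (if y \in B then a - w' y else 0).
Proof.
have eqB : forall C : {set T}, y \notin C -> setw (reweight w' y a) C = setw w' C.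
  by move=> C yC; apply: eq_bigr => z zC; rewrite /reweight; case: eqP => // zy; rewrite -zy zC in yC.
case: ifP => yB; last by rewrite eqB ?yB ?addr0.
have := eqB (B :\ y) (negbT (setD11 y B)); rewrite /setw !(big_setD1 y yB) /= => ->.
by rewrite {1}/reweight eqxx; lra.
Qed.

Lemma setw_exchange (w' : T -> R) Bs e f : f \in Bs -> e \notin Bs ->
  setw w' (e |: (Bs :\ f)) + w' f = setw w' Bs + w' e.
Proof.
move=> fBs eBs; rewrite /setw big_setU1 ?in_setD1 ?(negbTE eBs) ?andbF //=.
by rewrite (big_setD1 f fBs) /=; lra.
Qed.

Lemma qcost_swap Q e f : e \in Q -> f \notin Q ->
  qcost UM (f |: (Q :\ e)) + cost UM e = qcost UM Q + cost UM f.
Proof.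
move=> eQ fQ; rewrite /qcost big_setU1 ?in_setD1 ?(negbTE fQ) ?andbF //=.
by rewrite (big_setD1 e eQ) /=; lra.
Qed.

Section Exchange.
Variables (Q Bs : {set T}) (e f : T).
Hypotheses (verQ : verifies UM Q Bs) (fBs : f \in Bs) (eBs : e \notin Bs).
Hypothesis basis_exchanged : basis (e |: (Bs :\ f)).

Let fe : (f == e) = false.
Proof. by apply/negbTE; apply: contraNneq eBs => <-. Qed.

Lemma verifies_exchange_le (w' : T -> R) : consistent UM Q w' -> w' f <= w' e.
Proof.
move=> cw'; have [_ minBs] := verQ cw'.
by have := minBs _ basis_exchanged; have := setw_exchange w' fBs eBs; lra.
Qed.

Lemma exchange_wt : w e <= w f -> w f = w e.
Proof. by have := verifies_exchange_le (consistent_wt Q); lra. Qed.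

Lemma exchange_mem_query : ~ trivial_elt UM e -> w e = Up UM e -> w e <= w f -> e \in Q.
Proof.
move=> ntriv wUe lef; apply/negPn/negP => eQ; have [x Ax ltx] := exists_lt_Up ntriv wUe.
have /verifies_exchange_le : consistent UM Q (reweight w e x).
  by apply: consistent_reweight (consistent_wt Q) Ax (subsetUr _ _) _; rewrite (negbTE eQ).
by rewrite /reweight eqxx fe; lra.
Qed.

Lemma exchange_Up : f \notin Q -> Up UM f <= w e.
Proof.
move=> fQ; apply: Up_le => a Aa.
have /verifies_exchange_le : consistent UM Q (reweight w f a).
  by apply: consistent_reweight (consistent_wt Q) Aa (subsetUr _ _) _; rewrite (negbTE fQ).
by rewrite /reweight eqxx eq_sym fe.
Qed.

Lemma exchange_verifies Q' : Q \subset e |: Q' -> w e = Up UM e -> w f = w e ->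
  (forall w', consistent UM Q' w' -> w' f = w f) -> verifies UM Q' (e |: (Bs :\ f)).
Proof.
move=> sQ wUe wfe fixf w' cw'; split=> // B' bB'.
pose w'' := reweight w' e (w e).
have cw'' : consistent UM Q w'' by apply: consistent_reweight cw' (wt_in UM e) sQ _.
have [_ minBs] := verQ cw''.
have le_e : w' e <= w e by rewrite wUe; apply: Aset_le_Up; apply: cw'.1.
have := minBs B' bB'; have := setw_exchange w'' fBs eBs.
rewrite !setw_reweight setU11 (negbTE eBs) /w'' /reweight eqxx fe (fixf _ cw') wfe.
by case: (e \in B'); lra.
Qed.

End Exchange.
End Weights.

Unset Implicit Arguments.

Theorem lemma17 (R : realType) (T : finType) (UM : umatroid R T)
    (D K B : {set T}) (e : T) :
  compatible_minor UM D K ->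
  e \in mground D K ->
  ~ trivial_elt UM e ->
  (* (i) *)
  MWB_minor UM (wt UM) D K B -> e \in B ->
  (* (ii) *)
  wt UM e = Up UM e ->
  (* (iii) *)
  e \in mground D K :\: mspan (mat UM) D K (B :\ e) ->
  (forall f, f \in mground D K :\: mspan (mat UM) D K (B :\ e) ->
     wt UM e <= wt UM f) ->
  (* (iv) : f in (E(M') \ span(B - e)) n E^U_{w_e} *)
  (forall f, f \in mground D K :\: mspan (mat UM) D K (B :\ e) ->
     Up UM f = wt UM e -> ~ trivial_elt UM f ->
     cost UM f <= cost UM e) ->
  compatible_minor UM D (e |: K).
Proof.
move=> [Q [Bs [certQ [minQ [verQ [sKBs dDBs]]]]]] _ ntriv_e [[iB _] _] eB wUe _ minw maxc.
have [eBs | eBs] := boolP (e \in Bs).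
  have seKBs : e |: K \subset Bs by rewrite subUset sub1set eBs.
  by exists Q, Bs.
have [bBs _] := verQ _ (consistent_wt UM Q).
have [f fBs [fNS bB2 seKB2 dDB2]] := basis_exchange_minor bBs sKBs dDBs iB eB eBs.
have lefe := minw f fNS.
have eQ := exchange_mem_query verQ fBs eBs bB2 ntriv_e wUe lefe.
have wfe := exchange_wt verQ fBs eBs bB2 lefe.
have [fixed | /boolp.not_orP [/negP fQ ntriv_f]] := boolp.pselect (f \in Q \/ trivial_elt UM f).
  suff verQ' : verifies UM Q (e |: (Bs :\ f)) by exists Q, (e |: (Bs :\ f)).
  have := exchange_verifies verQ fBs eBs bB2 (subsetUr _ _) wUe wfe; apply=> w' [wa eqQ].
  by case: fixed => [/eqQ // | trivf]; apply/(trivf (w' f)).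
have Upf : Up UM f = wt UM e.
  by apply/eqP; rewrite eq_le (exchange_Up verQ fBs eBs bB2 fQ) -wfe Aset_le_Up //; apply: wt_in.
pose Q2 := f |: (Q :\ e).
have sQQ2 : Q \subset e |: Q2.
  by apply/subsetP => x xQ; rewrite !inE xQ andbT; case: eqP => //= _; rewrite orbT.
have verQ2 := exchange_verifies verQ fBs eBs bB2 sQQ2 wUe wfe (fun w' c => c.2 f (setU11 _ _)).
have costQ2 : qcost UM Q2 <= qcost UM Q.
  by have := maxc f fNS Upf ntriv_f; have := qcost_swap UM eQ fQ; lra.
have certQ2 : certificate UM Q2 by exists (e |: (Bs :\ f)).
have minQ2 : forall Q', certificate UM Q' -> qcost UM Q2 <= qcost UM Q'.
  by move=> Q' /minQ; apply: le_trans costQ2.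
by exists Q2, (e |: (Bs :\ f)).
Qed.
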